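(* Let $\mathbb{M}=(M,+)$ be a commutative monoid with identity $0$ and let $A$ be an $\mathbb{M}$-RWTA over a graded alphabet $\Sigma$. Then there exists a sequential $\mathbb{M}$-RWTA $A'$ over $\Sigma$ such that $\mathbb{P}_A=\mathbb{P}_{A'}$, i.e. $\mathbb{P}_A(t)=\mathbb{P}_{A'}(t)$ for every tree $t\in T_\Sigma$.
   Context: A graded alphabet is a finite set $\Sigma=\bigcup_{k\in\mathbb{N}}\Sigma_k$, where $\Sigma_k$ is the set of symbols of arity $k$. The set $T_\Sigma$ of trees over $\Sigma$ is defined inductively: $f(t_1,\ldots,t_k)\in T_\Sigma$ whenever $f\in\Sigma_k$ and $t_1,\ldots,t_k\in T_\Sigma$. An $\mathbb{M}$-root-weighted tree automaton ($\mathbb{M}$-RWTA) is a tuple $A=(\Sigma,Q,\nu,\delta)$ where $Q$ is a finite set of states, $\nu:Q\to M$ is the root weight function, and $\delta\subseteq\bigcup_k Q\times\Sigma_k\times Q^k$ is the transition set. Write $\delta(f,q_1,\ldots,q_k)=\{q\mid (q,f,q_1,\ldots,q_k)\in\delta\}$, and for subsets $Q_1,\ldots,Q_k\subseteq Q$, $\delta(f,Q_1,\ldots,Q_k)=\bigcup_{(q_1,\ldots,q_k)\in Q_1\times\cdots\times Q_k}\delta(f,q_1,\ldots,q_k)$. For $S\subseteq Q$ put $\nu(S)=\sum_{s\in S}\nu(s)$ (so $\nu(\emptyset)=0$). Define $\Delta:T_\Sigma\to 2^Q$ by $\Delta(f(t_1,\ldots,t_k))=\delta(f,\Delta(t_1),\ldots,\Delta(t_k))$.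 The tree series realized by $A$ is the map $\mathbb{P}_A:T_\Sigma\to M$, $\mathbb{P}_A(t)=\nu(\Delta(t))$. The RWTA $A$ is sequential if $\mathrm{Card}(\Delta(t))\le 1$ for every $t\in T_\Sigma$. *)

From HB Require Import structures.
From mathcomp Require Import all_boot all_order all_algebra.
Set Implicit Arguments. Unset Strict Implicit. Unset Printing Implicit Defensive.
Import GRing.Theory.
Local Open Scope ring_scope.

Section RWTA.
Variables (Sigma : finType) (ar : Sigma -> nat).

Inductive tree : Type :=
  Node (f : Sigma) of ('I_(ar f) -> tree).

Variable M : nmodType.

(* An M-root-weighted tree automaton (Sigma, Q, nu, delta):
   [delta q f qs] means (q, f, qs_1, ..., qs_k) is in the transition set. *)
Record rwta : Type := RWTA {
  state : finType;
  rootw : state -> M;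
  trans : state -> forall f : Sigma, {ffun 'I_(ar f) -> state} -> bool
}.

Variable A : rwta.

Fixpoint Delta (t : tree) : {set state A} :=
  match t with
  | Node f ts =>
      [set q | [exists qs : {ffun 'I_(ar f) -> state A},
                  [forall i, qs i \in Delta (ts i)] && trans q qs]]
  end.

Definition nuS (S : {set state A}) : M := \sum_(s in S) rootw s.

Definition series (t : tree) : M := nuS (Delta t).

Definition sequential : Prop := forall t : tree, (#|Delta t| <= 1)%N.

End RWTA.

From HB Require Import structures.
From mathcomp Require Import all_boot all_order all_algebra.

(* Subset construction: run the automaton on sets of states, with the single
   transition from (Q_1, ..., Q_k) to delta(f, Q_1, ..., Q_k) and root weight
   nu(S) on the state S.  By induction on trees, the only state reached on t
   is Delta(t), so the new automaton is sequential and assigns t the weight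
   nu(Delta(t)). *)

Section PowersetConstruction.
Variables (Sigma : finType) (ar : Sigma -> nat) (M : nmodType) (A : rwta ar M).

Definition trans_set (f : Sigma) (Qs : {ffun 'I_(ar f) -> {set state A}}) :
    {set state A} :=
  [set q | [exists qs : {ffun 'I_(ar f) -> state A},
              [forall i, qs i \in Qs i] && trans q qs]].

Lemma Delta_Node (f : Sigma) (ts : 'I_(ar f) -> tree ar) :
  Delta A (@Node _ ar f ts) = trans_set f [ffun i => Delta A (ts i)].
Proof.
apply/setP => q; rewrite !inE; apply: eq_existsb => qs.
by congr (_ && _); apply: eq_forallb => i; rewrite ffunE.
Qed.

Definition powerset_rwta : rwta ar M :=
  @RWTA _ ar M {set state A} (@nuS _ ar M A) (fun S f Qs => S == trans_set f Qs).

Lemma Delta_powerset (t : tree ar) : Delta powerset_rwta t = [set Delta A t].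
Proof.
elim: t => f ts IH; rewrite Delta_Node /=.
apply/setP => S; rewrite !inE /=; apply/existsP/eqP => [[Qs]|->].
- case/andP => /forallP Qs_reached /eqP ->.
  congr (trans_set f); apply/ffunP => i.
  by move: (Qs_reached i); rewrite IH inE => /eqP ->; rewrite ffunE.
- exists [ffun i => Delta A (ts i)]; rewrite eqxx andbT.
  by apply/forallP => i; rewrite IH ffunE inE.
Qed.

Lemma powerset_sequential : sequential powerset_rwta.
Proof. by move=> t; rewrite Delta_powerset cards1. Qed.

Lemma series_powerset (t : tree ar) : series powerset_rwta t = series A t.
Proof. by rewrite /series Delta_powerset /nuS big_set1. Qed.

End PowersetConstruction.

Theorem theorem1 (Sigma : finType) (ar : Sigma -> nat) (M : nmodType)
  (A : rwta ar M) :
  exists A' : rwta ar M,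
    sequential A' /\ forall t : tree ar, series A t = series A' t.
Proof.
exists (@powerset_rwta _ ar M A); split; first exact: powerset_sequential.
by move=> t; rewrite series_powerset.
Qed.
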